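(* Let $G$ be a compact, totally disconnected group and $\alpha$ an automorphism of $G$. Then there is an inverse system $\{(G_i,\alpha_i),\varphi_{ij},\mathcal{I}\}$ of compact groups $G_i$ with automorphisms $\alpha_i$, indexed by a directed set $\mathcal{I}$, with bonding homomorphisms $\varphi_{ij}$ satisfying $\varphi_{ij}\circ\alpha_j=\alpha_i\circ\varphi_{ij}$, such that each pair $(G_i,\alpha_i)$ has finite depth and $(G,\alpha)\cong\varprojlim(G_i,\alpha_i)$, i.e. $G$ is isomorphic as a topological group to the inverse limit via an isomorphism intertwining $\alpha$ with the automorphism induced by the $\alpha_i$.
   Context: A pair $(K,\beta)$, with $K$ a compact group and $\beta$ an automorphism, has finite depth if there is an open subgroup $V\le K$ with $\bigcap_{k\in\mathbb{Z}}\beta^k(V)=\{1\}$. *)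

From HB Require Import structures.
From mathcomp Require Import all_boot all_order all_algebra.
From mathcomp Require Import all_classical all_reals.
From mathcomp Require Import topology.
Set Implicit Arguments. Unset Strict Implicit. Unset Printing Implicit Defensive.
Import Order.TTheory GRing.Theory Num.Theory.
Local Open Scope classical_set_scope.

Record topGroup := TopGroup {
  tg_carrier : topologicalType;
  tg_mul : tg_carrier -> tg_carrier -> tg_carrier;
  tg_inv : tg_carrier -> tg_carrier;
  tg_one : tg_carrier;
  tg_mulA : forall x y z, tg_mul x (tg_mul y z) = tg_mul (tg_mul x y) z;
  tg_mul1 : forall x, tg_mul tg_one x = x;
  tg_mulV : forall x, tg_mul (tg_inv x) x = tg_one;
  tg_mul_cont : continuous (fun p : tg_carrier * tg_carrier => tg_mul p.1 p.2);
  tg_inv_cont : continuous tg_inv }.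
Coercion tg_carrier : topGroup >-> topologicalType.
Arguments tg_one {t}.
Arguments tg_mul {t}.
Arguments tg_inv {t}.

Definition compact_group (G : topGroup) : Prop :=
  compact [set: tg_carrier G] /\ hausdorff_space (tg_carrier G).

Definition tg_hom (G H : topGroup) (f : G -> H) : Prop :=
  forall x y, f (tg_mul x y) = tg_mul (f x) (f y).

Definition cont_hom (G H : topGroup) (f : G -> H) : Prop :=
  tg_hom f /\ continuous f.

Definition tg_aut (G : topGroup) (a : G -> G) : Prop :=
  cont_hom a /\ exists b : G -> G, [/\ cancel a b, cancel b a & continuous b].

Definition subgroup (G : topGroup) (V : set G) : Prop :=
  [/\ V tg_one, (forall x y, V x -> V y -> V (tg_mul x y))
    & forall x, V x -> V (tg_inv x)].

Definition open_subgroup (G : topGroup) (V : set G) : Prop :=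
  subgroup V /\ open V.

(** beta^k(V) for k : int (beta^(-n) (V) is the n-fold preimage). *)
Definition aut_pow_set (G : topGroup) (b : G -> G) (V : set G) (k : int)
  : set G :=
  match k with
  | Posz n => iter n (fun S => b @` S) V
  | Negz n => iter n.+1 (fun S => b @^-1` S) V
  end.

Definition finite_depth (K : topGroup) (b : K -> K) : Prop :=
  exists V : set K, open_subgroup V /\
    \bigcap_(k in [set: int]) aut_pow_set b V k = [set tg_one].

Definition directed_set (I : Type) (le : I -> I -> Prop) : Prop :=
  [/\ (exists i : I, True), (forall i, le i i),
      (forall i j k, le i j -> le j k -> le i k)
    & forall i j, exists k, le i k /\ le j k].

(** An inverse system of compact groups with automorphisms over (I, le):
    bonding maps phi i j : G j -> G i (meaningful only when le i j). *)
Definition inverse_system_aut (I : Type) (le : I -> I -> Prop)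
  (G : I -> topGroup) (a : forall i, G i -> G i)
  (phi : forall i j, G j -> G i) : Prop :=
  directed_set le /\
  (forall i, compact_group (G i) /\ tg_aut (a i)) /\
  (forall i j, le i j -> cont_hom (phi i j)) /\
  (forall i x, phi i i x = x) /\
  (forall i j k x, le i j -> le j k -> phi i j (phi j k x) = phi i k x) /\
  (forall i j x, le i j -> phi i j (a j x) = a i (phi i j x)).

Definition inv_lim (I : Type) (le : I -> I -> Prop) (G : I -> topGroup)
  (phi : forall i j, G j -> G i) : set (prod_topology (fun i => tg_carrier (G i))) :=
  [set x | forall i j, le i j -> phi i j (x j) = x i].

(** f : G -> lim G_i is an isomorphism of topological groups from G onto the
    inverse limit (with the subspace topology and pointwise group law),
    intertwining a with the automorphism induced by the a_i. *)
Definition lim_iso_aut (K : topGroup) (alpha : K -> K) (I : Type)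
  (le : I -> I -> Prop) (G : I -> topGroup) (a : forall i, G i -> G i)
  (phi : forall i j, G j -> G i)
  (f : K -> prod_topology (fun i => tg_carrier (G i))) : Prop :=
  (forall x y i, f (tg_mul x y) i = tg_mul (f x i) (f y i)) /\
  continuous f /\ injective f /\
  range f = inv_lim le phi /\
  (forall U : set K, open U ->
     exists W, open W /\ f @` U = W `&` inv_lim le phi) /\
  (forall x i, f (alpha x) i = a i (f x i)).

(* A compact totally disconnected group [G] has a base of clopen
   neighbourhoods of [1], and by a tube-lemma argument every clopen
   neighbourhood of [1] contains an open normal subgroup [C].  The stable core
   [K_C] of [C], the intersection of all [alpha^k(C)] for [k] in [Z], is a normal
   subgroup invariant under [alpha] and an intersection of open subgroups, so
   [G/K_C] is a compact group on which [alpha] induces an automorphism, and the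
   image of [C] in [G/K_C] witnesses finite depth.  The quotient maps
   [G -> G/K_C] separate points from closed sets, so [G] embeds
   homeomorphically into the product of the [G/K_C]; by compactness its image
   is the whole inverse limit. *)

From HB Require Import structures.
From mathcomp Require Import all_boot all_order all_algebra.
From mathcomp Require Import all_classical all_reals.
From mathcomp Require Import topology.
Set Implicit Arguments. Unset Strict Implicit. Unset Printing Implicit Defensive.
Local Open Scope classical_set_scope.

Section TopGroupIsGroup.
Variable G : topGroup.

Lemma tg_mulgV (x : G) : tg_mul x (tg_inv x) = tg_one.
Proof.
rewrite -[LHS]tg_mul1 -(tg_mulV (tg_inv x)) -tg_mulA.
by rewrite [tg_mul (tg_inv x) _]tg_mulA tg_mulV tg_mul1 tg_mulV.
Qed.

Lemma tg_mulg1 (x : G) : tg_mul x tg_one = x.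
Proof. by rewrite -(tg_mulV x) tg_mulA tg_mulgV tg_mul1. Qed.

End TopGroupIsGroup.

(* [isGroup] is unrelated to the topological structure on the carrier, so
   this instance creates no competing inheritance path. *)
#[non_forgetful_inheritance]
HB.instance Definition _ (G : topGroup) := isGroup.Build (tg_carrier G)
  (@tg_mulA G) (@tg_mul1 G) (@tg_mulg1 G) (@tg_mulV G) (@tg_mulgV G).

Local Open Scope group_scope.

Lemma continuous_fst (A B : topologicalType) : continuous (@fst A B).
Proof. by move=> ?; exact: cvg_fst. Qed.

Lemma continuous_snd (A B : topologicalType) : continuous (@snd A B).
Proof. by move=> ?; exact: cvg_snd. Qed.

Lemma continuous_iter (T : topologicalType) (f : T -> T) n :
  continuous f -> continuous (iter n f).
Proof.
move=> cf; elim: n => [|n IH] x /=; first exact: cvg_id.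
by apply: continuous_comp; [exact: IH|exact: cf].
Qed.

Lemma separated_setU_closedl (T : topologicalType) (A B : set T) :
  closed (A `|` B) -> separated A B -> closed A.
Proof.
move=> cAB [clAB0 _] z clAz.
have [//|Bz] := cAB z (closureS (@subsetUl _ A B) clAz).
by have : (closure A `&` B) z by []; rewrite clAB0.
Qed.

Lemma image_iter_can (T : Type) (f g : T -> T) (A : set T) n :
  cancel f g -> cancel g f -> iter n (fun S => f @` S) A = iter n g @^-1` A.
Proof.
move=> fK gK; elim: n => //= n ->; apply/seteqP; split => x /=.
  by case=> y Ay <-; change (A (iter n.+1 g (f y))); rewrite iterSr fK.
by move=> Agx; exists (g x); [rewrite -iterSr|exact: gK].
Qed.

Lemma preimage_iter (T : Type) (f : T -> T) (A : set T) n :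
  iter n (fun S => f @^-1` S) A = iter n f @^-1` A.
Proof. by elim: n => //= n ->; apply/seteqP; split => x; rewrite /= -iterSr. Qed.

Section TopGroupContinuity.
Variable G : topGroup.

Lemma continuous_mulg (X : topologicalType) (f g : X -> G) :
  continuous f -> continuous g -> continuous (fun t => f t * g t : G).
Proof.
move=> cf cg t.
exact: (continuous2_cvg _ (@tg_mul_cont G (f t, g t)) (cf t) (cg t)).
Qed.

Lemma continuous_invg (X : topologicalType) (f : X -> G) :
  continuous f -> continuous (fun t => (f t)^-1 : G).
Proof. by move=> cf t; apply: continuous_comp; [exact: cf|exact: tg_inv_cont]. Qed.

Lemma continuous_mulgl (c : G) : continuous (fun x : G => c * x : G).
Proof.
have cc : continuous (fun _ : G => c) by move=> x; exact: cvg_cst.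
exact: (continuous_mulg cc (fun x => @cvg_id _ (nbhs x))).
Qed.

Lemma continuous_mulgr (c : G) : continuous (fun x : G => x * c : G).
Proof.
have cc : continuous (fun _ : G => c) by move=> x; exact: cvg_cst.
exact: (continuous_mulg (fun x => @cvg_id _ (nbhs x)) cc).
Qed.

Lemma open_mulgl_preimage (c : G) (A : set G) : open A -> open [set x | A (c * x)].
Proof. exact: (iffLR (continuousP _) (@continuous_mulgl c) A). Qed.

Lemma open_mulgr_preimage (c : G) (A : set G) : open A -> open [set x | A (x * c)].
Proof. exact: (iffLR (continuousP _) (@continuous_mulgr c) A). Qed.

Lemma open_mulg_preimage (A : set G) : open A -> open [set p : G * G | A (p.1 * p.2)].
Proof.
apply: (iffLR (continuousP _)).
exact: continuous_mulg (@continuous_fst G G) (@continuous_snd G G).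
Qed.

Lemma open_invg_preimage (A : set G) : open A -> open [set x | A x^-1].
Proof. exact: (iffLR (continuousP _) (@tg_inv_cont G) A). Qed.

End TopGroupContinuity.

Lemma tg_homP (G H : topGroup) (f : G -> H) :
  tg_hom f <-> {morph f : x y / x * y}.
Proof. by []. Qed.

Lemma tg_hom1 (G H : topGroup) (f : G -> H) : tg_hom f -> f 1 = 1.
Proof. by move/tg_homP => hf; apply: (@mulgI _ (f 1)); rewrite -hf !mulg1. Qed.

Lemma tg_homV (G H : topGroup) (f : G -> H) x : tg_hom f -> f x^-1 = (f x)^-1.
Proof.
by move=> hf; apply/esym/mulg1_eq; rewrite -(tg_homP f).1 // mulgV tg_hom1.
Qed.

Lemma tg_homJ (G H : topGroup) (f : G -> H) x g : tg_hom f -> f (x ^ g) = f x ^ f g.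
Proof. by move=> hf; rewrite !conjgE !(tg_homP f).1 // tg_homV. Qed.

Lemma tg_hom_iter (G : topGroup) (f : G -> G) n : tg_hom f -> tg_hom (iter n f).
Proof. by move=> hf x y; elim: n => //= n ->; exact: hf. Qed.

Lemma tg_hom_can (G H : topGroup) (f : G -> H) (g : H -> G) :
  tg_hom f -> cancel f g -> cancel g f -> tg_hom g.
Proof. by move=> hf fK gK x y; apply: (can_inj fK); rewrite hf !gK. Qed.

Lemma open_subgroup_preimage (G H : topGroup) (f : G -> H) (V : set H) :
  tg_hom f -> continuous f -> open_subgroup V -> open_subgroup (f @^-1` V).
Proof.
move=> /tg_homP hf cf [[V1 VM VV] oV]; split; last exact: (iffLR (continuousP _) cf).
split => [|x y|x] /=; first by rewrite tg_hom1.
  by rewrite hf; exact: VM.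
by rewrite tg_homV //; exact: VV.
Qed.

(** * Compact totally disconnected spaces *)

Section QuasiComponent.
Variable T : topologicalType.
Hypotheses (hT : hausdorff_space T) (cT : compact [set: T]).

Definition quasi_component (x : T) := [set y | forall K, clopen K -> K x -> K y].

Lemma closed_quasi_component x : closed (quasi_component x).
Proof.
move=> y cly K cK Kx; have [_ /closure_id ->] := cK.
by apply: (closureS _ cly) => z; apply.
Qed.

(* The clopen neighbourhoods of [x] minus [W] form a filter base of closed
   subsets of a compact space; a cluster point would lie in the quasi-component
   but not in [W]. *)
Lemma quasi_component_clopen_sub x (W : set T) : open W ->
  quasi_component x `<=` W -> exists K, [/\ clopen K, K x & K `<=` W].
Proof.
move=> oW QW; apply: contrapT => /forallNP noK.
pose F := filter_from [set K | clopen K /\ K x] (fun K => K `&` ~` W).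
have FF : ProperFilter F.
  apply: filter_from_proper.
    apply: filter_from_filter; first by exists setT; split => //; exact: clopenT.
    move=> A B [cA Ax] [cB Bx]; exists (A `&` B); first by split => //; exact: clopenI.
    by move=> y [[Ay By] nWy].
  move=> K [cK Kx]; apply/set0P/eqP => /disjoints_subset KW.
  by apply: (noK K); split => // y /KW /contrapT.
have cW : compact (~` W) by apply: (subclosed_compact _ cT) => //; exact: open_closedC.
have FW : F (~` W) by exists setT; [split => //; exact: clopenT|move=> y []].
have [y [nWy Fy]] := cW F FF FW.
apply: nWy; apply: QW => K cK Kx; apply: contrapT => nKy.
have nbhsKC : nbhs y (~` K).
  by apply: open_nbhs_nbhs; split => //; apply: closed_openC; case: cK.
have FK : F (K `&` ~` W) by exists K.
by have [z [[Kz _] nKz]] := Fy _ _ FK nbhsKC.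
Qed.

Lemma compact_separate_closed (A B : set T) : closed A -> closed B ->
  A `&` B = set0 ->
  exists U V, [/\ open U, open V, A `<=` U, B `<=` V & U `&` V = set0].
Proof.
move=> cA cB AB0.
have nbhsA : set_nbhs A (~` B).
  apply/set_nbhsP; exists (~` B); split => //; first exact: closed_openC.
  by move=> z Az Bz; have : (A `&` B) z by []; rewrite AB0.
have [C /set_nbhsP [U [oU AU UC]] clCB] := compact_normal hT cT cA nbhsA.
exists U, (~` closure C); split => //.
- exact/closed_openC/closed_closure.
- by move=> z Bz /clCB.
- by apply/seteqP; split => // z [/UC Cz]; apply; exact: subset_closure.
Qed.

Lemma quasi_component_sub_open_setU x (U V : set T) : open U -> open V ->
  U `&` V = set0 -> quasi_component x `<=` U `|` V ->
  quasi_component x `<=` U \/ quasi_component x `<=` V.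
Proof.
wlog Ux : U V / U x.
  move=> wlog_Ux oU oV UV0 QUV; have [Ux|Vx] := QUV x (fun K _ Kx => Kx).
    exact: wlog_Ux.
  by rewrite or_comm; apply: wlog_Ux => //; rewrite (setIC, setUC).
move=> oU oV UV0 QUV; left.
have [K [[oK clK] Kx KUV]] := quasi_component_clopen_sub (openU oU oV) QUV.
have KU : K `&` U = K `&` ~` V.
  apply/seteqP; split => z [Kz].
    by move=> Uz; split => // Vz; have : (U `&` V) z by []; rewrite UV0.
  by move=> nVz; split => //; case: (KUV z Kz).
have cKU : clopen (K `&` U).
  by split; [exact: openI|rewrite KU; apply: closedI => //; exact: open_closedC].
by move=> y Qy; have [] := Qy _ cKU (conj Kx Ux).
Qed.

Lemma connected_quasi_component x : connected (quasi_component x).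
Proof.
apply/connectedP => E [E0 QE sepE].
have cQ : closed (E false `|` E true) by rewrite -QE; exact: closed_quasi_component.
have cE0 := separated_setU_closedl cQ sepE.
have cE1 : closed (E true).
  by apply: (@separated_setU_closedl _ _ (E false)); rewrite 1?setUC // separatedC.
have [U [V [oU oV E0U E1V UV0]]] :=
  compact_separate_closed cE0 cE1 (separated_disjoint sepE).
have QUV : quasi_component x `<=` U `|` V by rewrite QE => z [/E0U|/E1V]; [left|right].
have UV0P y : U y -> V y -> False.
  by move=> Uy Vy; have : (U `&` V) y by []; rewrite UV0.
have [QU|QV] := quasi_component_sub_open_setU oU oV UV0 QUV.
- have [y E1y] := E0 true; apply: (UV0P y); last exact: E1V.
  by apply: QU; rewrite QE; right.
- have [y E0y] := E0 false; apply: (UV0P y); first exact: E0U.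
  by apply: QV; rewrite QE; left.
Qed.

Lemma totally_disconnected_clopen_nbhs (x : T) (U : set T) :
  totally_disconnected [set: T] -> open U -> U x ->
  exists K, [/\ clopen K, K x & K `<=` U].
Proof.
move=> tdT oU Ux; apply: quasi_component_clopen_sub => // y Qy.
suff : connected_component [set: T] x y by rewrite tdT // => ->.
have Qx : quasi_component x x by move=> K _.
exact: (connected_component_max Qx (@subsetT _ _) (@connected_quasi_component x)) Qy.
Qed.
End QuasiComponent.

(** * Open normal subgroups *)

Definition conjg_closed (G : topGroup) (N : set G) := forall x g, N x -> N (x ^ g).

Definition open_normal_subgroup (G : topGroup) (N : set G) :=
  open_subgroup N /\ conjg_closed N.

Lemma open_normal_subgroupT (G : topGroup) : open_normal_subgroup [set: G].
Proof. by split; [split; [split|exact: openT]|]. Qed.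

Lemma open_normal_subgroupI (G : topGroup) (C D : set G) :
  open_normal_subgroup C -> open_normal_subgroup D ->
  open_normal_subgroup (C `&` D).
Proof.
move=> [[[C1 CM CV] oC] CJ] [[[D1 DM DV] oD] DJ].
split; [split; [split|exact: openI]|] => //.
- by move=> x y [? ?] [? ?]; split; [exact: CM|exact: DM].
- by move=> x [? ?]; split; [exact: CV|exact: DV].
- by move=> x g [? ?]; split; [exact: CJ|exact: DJ].
Qed.

(* [H] is the set of [h] such that every conjugate of [h] and of [h^-1]
   right-translates [K] into [K]; a tube-lemma argument over [K * G] shows
   that [H] is a neighbourhood of [1]. *)
Lemma open_normal_subgroup_sub_clopen (G : topGroup) (K : set G) :
  compact [set: G] -> clopen K -> K 1 ->
  exists H, open_normal_subgroup H /\ H `<=` K.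
Proof.
move=> cG [oK clK] K1.
have cKG : compact (K `*` [set: G]).
  by apply: compact_setX => //; exact: (subclosed_compact clK cG).
pose conjR (p : (G * G) * G) : G := p.1.1 * p.2 ^ p.1.2.
have c_conjR : continuous conjR.
  have c11 : continuous (fun p : (G * G) * G => p.1.1).
    by move=> p; apply: continuous_comp; exact: continuous_fst.
  have c12 : continuous (fun p : (G * G) * G => p.1.2).
    by move=> p; apply: continuous_comp; [exact: continuous_fst|exact: continuous_snd].
  apply: continuous_mulg => //; apply: continuous_mulg; first exact: continuous_invg.
  exact: continuous_mulg (@continuous_snd _ _) c12.
have : \forall v \near (1 : G), K `*` [set: G] `<=` (fun p => K (p.1 * v ^ p.2)).
  apply: (iffLR (compact_near_coveringP _) cKG) => -[k g] [/= Kk _].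
  apply: (c_conjR ((k, g), 1)); apply: open_nbhs_nbhs; split => //.
  by rewrite /conjR /= conj1g mulg1.
rewrite /prop_near1 (@nbhsE G) => -[V [oV V1] VK].
pose H := [set h : G | forall g k, K k -> K (k * h ^ g) /\ K (k * h^-1 ^ g)].
have H1 : H 1 by move=> g k Kk; rewrite invg1 conj1g mulg1.
have HM : forall x y, H x -> H y -> H (x * y).
  move=> x y Hx Hy g k Kk; rewrite conjMg invgM conjMg.
  split; rewrite mulgA; first exact: (Hy g _ (Hx g k Kk).1).1.
  exact: (Hx g _ (Hy g k Kk).2).2.
have HV : forall x, H x -> H x^-1 by move=> x Hx g k /(Hx g) []; rewrite invgK.
have HJ : conjg_closed H by move=> x g' Hx g k Kk; rewrite -conjVg -!conjgM; exact: Hx.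
pose S := V `&` [set v | V v^-1].
have SH : S `<=` H.
  by move=> v [Vv Viv] g k Kk; split; [exact: (VK v Vv (k, g))|exact: (VK _ Viv (k, g))].
have oS : open S by apply: openI => //; exact: open_invg_preimage.
exists H; split; last by move=> h /(_ 1 1 K1) []; rewrite mul1g conjg1.
split => //; split => //.
rewrite openE => h Hh; have : nbhs h [set y | S (h^-1 * y)].
  apply: open_nbhs_nbhs; split; first exact: open_mulgl_preimage.
  by rewrite /= mulVg; split; rewrite //= invg1.
by apply: filterS => y /SH Hy; rewrite -(mulVKg h y); exact: HM.
Qed.

(** * Quotient groups *)

Section QuotientGroup.
Local Open Scope quotient_scope.
Variables (G : topGroup) (N : set G).
Hypotheses (sgN : subgroup N) (nN : conjg_closed N).

Let N1 : N 1. Proof. by case: sgN. Qed.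
Let NM x y : N x -> N y -> N (x * y). Proof. by case: sgN => _ + _; apply. Qed.
Let NV x : N x -> N x^-1. Proof. by case: sgN => _ _; apply. Qed.

Definition coset_rel (x y : G) : bool := `[< N (x^-1 * y) >].

Lemma coset_refl : reflexive coset_rel.
Proof. by move=> x; apply/asboolP; rewrite mulVg. Qed.

Lemma coset_sym : symmetric coset_rel.
Proof.
suff imp x y : coset_rel x y -> coset_rel y x by move=> x y; apply/idP/idP; exact: imp.
by move=> /asboolP /NV; rewrite invgM invgK => ?; apply/asboolP.
Qed.

Lemma coset_trans : transitive coset_rel.
Proof.
move=> y x z /asboolP Nxy /asboolP Nyz; apply/asboolP.
by rewrite -[z](mulVKg y) mulgA; exact: NM.
Qed.

Definition coset_equiv := EquivRel coset_rel coset_refl coset_sym coset_trans.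

Definition quotient_space := quotient_topology {eq_quot coset_equiv}.

Definition qpi : G -> quotient_space := \pi.

Lemma qpi_eqP x y : qpi x = qpi y <-> N (x^-1 * y).
Proof.
have -> : (qpi x = qpi y) = (x = y %[mod_eq coset_equiv]) by [].
by split => [/(@eqmodP _ coset_equiv)/asboolP|/asboolP/(@eqmodP _ coset_equiv)].
Qed.

Lemma qpiK q : qpi (repr q) = q. Proof. exact: reprK. Qed.

Lemma qpiM_congr x x' y y' :
  qpi x = qpi x' -> qpi y = qpi y' -> qpi (x * y) = qpi (x' * y').
Proof.
move=> /qpi_eqP Nx /qpi_eqP Ny; apply/qpi_eqP.
have -> : (x * y)^-1 * (x' * y') = (x^-1 * x') ^ y * (y^-1 * y').
  by rewrite invgM conjgE !mulgA mulgK.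
by apply: NM => //; exact: nN.
Qed.

Lemma qpiV_congr x x' : qpi x = qpi x' -> qpi x^-1 = qpi x'^-1.
Proof.
move=> /qpi_eqP Nx; apply/qpi_eqP.
have -> : x^-1^-1 * x'^-1 = (x^-1 * x')^-1 ^ x^-1.
  by rewrite conjgE !invgM !invgK !mulgA mulgK.
exact/nN/NV.
Qed.

Definition qmul (p q : quotient_space) := qpi (repr p * repr q).
Definition qinv (p : quotient_space) := qpi (repr p)^-1.

Lemma qpiM x y : qmul (qpi x) (qpi y) = qpi (x * y).
Proof. exact: qpiM_congr (qpiK _) (qpiK _). Qed.

Lemma qpiV x : qinv (qpi x) = qpi x^-1.
Proof. exact: qpiV_congr (qpiK _). Qed.

Lemma qmulA : forall p q r, qmul p (qmul q r) = qmul (qmul p q) r.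
Proof. by move=> p q r; rewrite -[p]qpiK -[q]qpiK -[r]qpiK !qpiM mulgA. Qed.

Lemma qmul1 : forall p, qmul (qpi 1) p = p.
Proof. by move=> p; rewrite -[p]qpiK qpiM mul1g. Qed.

Lemma qmulV : forall p, qmul (qinv p) p = qpi 1.
Proof. by move=> p; rewrite -[p]qpiK qpiV qpiM mulVg. Qed.

Lemma continuous_qpi : continuous qpi. Proof. exact: pi_continuous. Qed.

Lemma open_qpi_image (A : set G) : open A -> open (qpi @` A).
Proof.
move=> oA; change (open (qpi @^-1` (qpi @` A))).
have -> : qpi @^-1` (qpi @` A) = \bigcup_(n in N) [set y | A (y * n^-1)].
  apply/seteqP; split => y /=.
    case=> a Aa /qpi_eqP Nay; exists (a^-1 * y) => //=.
    by rewrite invgM invgK mulgA mulgV mul1g.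
  case=> n Nn Ayn; exists (y * n^-1) => //; apply/qpi_eqP.
  by rewrite invgM invgK mulgVK.
by apply: bigcup_open => n _; exact: open_mulgr_preimage.
Qed.

Lemma nbhs_qpi_image x (A : set G) : open A -> A x -> nbhs (qpi x) (qpi @` A).
Proof.
by move=> oA Ax; apply: open_nbhs_nbhs; split; [exact: open_qpi_image|exists x].
Qed.

Lemma continuous_qmul :
  continuous (fun p : quotient_space * quotient_space => qmul p.1 p.2).
Proof.
move=> [a b] W /=; rewrite (@nbhsE quotient_space) => -[O [oO Oab] OW].
rewrite -(qpiK a) -(qpiK b) qpiM in Oab.
have : nbhs (repr a, repr b) [set p : G * G | O (qpi (p.1 * p.2))].
  exact: (@open_nbhs_nbhs _ (repr a, repr b) _ (conj (open_mulg_preimage oO) Oab)).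
case=> -[A B] /= [nA nB] AB.
move: nA nB; rewrite !nbhsE => -[A' [oA' A'a] A'A] [B' [oB' B'b] B'B].
exists (qpi @` A', qpi @` B') => /=.
  by split; [rewrite -[a]qpiK|rewrite -[b]qpiK]; exact: nbhs_qpi_image.
move=> [p q] /= [[x Ax <-] [y By <-]]; apply: OW; rewrite qpiM.
by apply: (AB (x, y)); split; [exact: A'A|exact: B'B].
Qed.

Lemma continuous_qinv : continuous qinv.
Proof.
apply/quotient_continuous.
have -> : qinv \o \pi = qpi \o (fun x : G => x^-1) by apply: funext => x; exact: qpiV.
by move=> x; apply: continuous_comp; [exact: tg_inv_cont|exact: continuous_qpi].
Qed.

Lemma compact_quotient : compact [set: G] -> compact [set: quotient_space].
Proof.
move=> cG; have -> : [set: quotient_space] = qpi @` [set: G].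
  by apply/seteqP; split => q // _; exists (repr q) => //; exact: qpiK.
by apply: continuous_compact => //; apply: continuous_subspaceT; exact: continuous_qpi.
Qed.

Lemma hausdorff_quotient :
  (forall z, ~ N z -> exists M, [/\ open_subgroup M, N `<=` M & ~ M z]) ->
  hausdorff_space quotient_space.
Proof.
move=> sepN; rewrite open_hausdorff => p q; rewrite -[p]qpiK -[q]qpiK.
move: (repr p) (repr q) => x y /eqP nxy {p q}.
have /sepN [M [[[M1 MM MV] oM] NM' nMxy]] : ~ N (x^-1 * y) by move/qpi_eqP.
exists (qpi @` [set z | M (x^-1 * z)], qpi @` [set z | M (y^-1 * z)]).
  by split; rewrite inE; [exists x|exists y]; rewrite //= mulVg.
split; try by apply: open_qpi_image; exact: open_mulgl_preimage.
apply/eqP/seteqP; split => // r [[z1 Mz1 <-] [z2 Mz2 /esym /qpi_eqP /NM' Mz12]].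
apply: nMxy; have -> : x^-1 * y = (x^-1 * z1) * (z1^-1 * z2) * (y^-1 * z2)^-1.
  by rewrite invgM invgK !mulgA !mulgK.
by apply: (MM); [apply: (MM)|apply: MV].
Qed.

Definition quotient_topGroup : topGroup :=
  TopGroup qmulA qmul1 qmulV continuous_qmul continuous_qinv.

Lemma open_subgroup_qpi_image (A : set G) :
  open_subgroup A -> open_subgroup (qpi @` A : set quotient_topGroup).
Proof.
move=> [[A1 AM AV] oA]; split; last exact: open_qpi_image.
split; first by exists 1.
  by move=> _ _ [x Ax <-] [y Ay <-]; exists (x * y); [exact: AM|rewrite /= qpiM].
by move=> _ [x Ax <-]; exists x^-1; [exact: AV|rewrite /= qpiV].
Qed.

Section InducedMap.
Variable a : G -> G.
Hypotheses (ha : tg_hom a) (aN : forall x, N x -> N (a x)).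
Let haM : {morph a : x y / x * y} := ha.

Definition qmap (q : quotient_topGroup) : quotient_topGroup := qpi (a (repr q)).

Lemma qmapE x : qmap (qpi x) = qpi (a x).
Proof.
apply/qpi_eqP; rewrite -tg_homV // -haM; apply: aN.
by apply/qpi_eqP; rewrite qpiK.
Qed.

Lemma tg_hom_qmap : tg_hom qmap.
Proof. by move=> p q; rewrite -[p]qpiK -[q]qpiK /= qpiM !qmapE haM qpiM. Qed.

Lemma continuous_qmap : continuous a -> continuous qmap.
Proof.
move=> ca; apply/quotient_continuous.
have -> : qmap \o \pi = qpi \o a by apply: funext => x; exact: qmapE.
by move=> x; apply: continuous_comp; [exact: ca|exact: continuous_qpi].
Qed.

Lemma iter_qmapE n x : iter n qmap (qpi x) = qpi (iter n a x).
Proof. by elim: n => //= n ->; exact: qmapE. Qed.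
End InducedMap.
End QuotientGroup.

(** * Finite-depth quotients *)

Section StableCore.
Variables (G : topGroup) (al be : G -> G).
Hypotheses (hal : tg_hom al) (hbe : tg_hom be).
Hypotheses (cal : continuous al) (cbe : continuous be).
Hypotheses (alK : cancel al be) (beK : cancel be al).
Variable C : set G.
Hypothesis onC : open_normal_subgroup C.

(* The intersection of the [al^k(C)] for [k] in [Z], where [be = al^-1]. *)
Definition stable_core := [set x | forall n, C (iter n al x) /\ C (iter n be x)].

Lemma stable_core_sub : stable_core `<=` C.
Proof. by move=> x /(_ 0) []. Qed.

Lemma subgroup_stable_core : subgroup stable_core.
Proof.
have [[[C1 CM CV] _] _] := onC.
have hal_n n : tg_hom (iter n al) by exact: tg_hom_iter.
have hbe_n n : tg_hom (iter n be) by exact: tg_hom_iter.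
split => [n|x y Kx Ky n|x Kx n].
- by rewrite !tg_hom1.
- by rewrite hal_n hbe_n; have [? ?] := Kx n; have [? ?] := Ky n; split; exact: CM.
- by rewrite !tg_homV //; have [? ?] := Kx n; split; exact: CV.
Qed.

Lemma conjg_closed_stable_core : conjg_closed stable_core.
Proof.
move=> x g Kx n; rewrite !tg_homJ; try exact: tg_hom_iter.
by have [[_ CJ] [? ?]] := (onC, Kx n); split; exact: CJ.
Qed.

Lemma stable_core_al x : stable_core x -> stable_core (al x).
Proof.
move=> Kx n; split; first by rewrite -iterSr; case: (Kx n.+1).
by case: n => [|n]; [case: (Kx 1%N)|rewrite iterSr alK; case: (Kx n)].
Qed.

Lemma stable_core_be x : stable_core x -> stable_core (be x).
Proof.
move=> Kx n; split; last by rewrite -iterSr; case: (Kx n.+1).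
by case: n => [|n]; [case: (Kx 1%N)|rewrite iterSr beK; case: (Kx n)].
Qed.

Lemma stable_core_separated z : ~ stable_core z ->
  exists M, [/\ open_subgroup M, stable_core `<=` M & ~ M z].
Proof.
have oC := onC.1; move=> /existsNP [n /not_andP [nC|nC]].
- exists (iter n al @^-1` C); split => [|x /(_ n) []//|//].
  by apply: open_subgroup_preimage oC; [exact: tg_hom_iter|exact: continuous_iter].
- exists (iter n be @^-1` C); split => [|x /(_ n) []//|//].
  by apply: open_subgroup_preimage oC; [exact: tg_hom_iter|exact: continuous_iter].
Qed.

Definition core_quotient : topGroup :=
  quotient_topGroup subgroup_stable_core conjg_closed_stable_core.

Definition core_aut : core_quotient -> core_quotient :=
  @qmap _ _ subgroup_stable_core conjg_closed_stable_core al.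

Definition core_aut_inv : core_quotient -> core_quotient :=
  @qmap _ _ subgroup_stable_core conjg_closed_stable_core be.

Local Notation core_pi := (qpi subgroup_stable_core).
Local Notation core_qmapE := (qmapE subgroup_stable_core conjg_closed_stable_core).
Local Notation core_iter_qmapE :=
  (iter_qmapE subgroup_stable_core conjg_closed_stable_core).

Lemma core_autE x : core_aut (core_pi x) = core_pi (al x).
Proof. exact: core_qmapE hal stable_core_al x. Qed.

Lemma core_aut_invE x : core_aut_inv (core_pi x) = core_pi (be x).
Proof. exact: core_qmapE hbe stable_core_be x. Qed.

Lemma core_autK : cancel core_aut core_aut_inv.
Proof. by move=> q; rewrite -[q]qpiK core_autE core_aut_invE alK. Qed.

Lemma core_autVK : cancel core_aut_inv core_aut.
Proof. by move=> q; rewrite -[q]qpiK core_aut_invE core_autE beK. Qed.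

Lemma tg_aut_core_aut : tg_aut core_aut.
Proof.
split; first split.
- exact: tg_hom_qmap hal stable_core_al.
- exact: continuous_qmap hal stable_core_al cal.
exists core_aut_inv; split; [exact: core_autK|exact: core_autVK|].
exact: continuous_qmap hbe stable_core_be cbe.
Qed.

Lemma compact_group_core_quotient : compact [set: G] -> compact_group core_quotient.
Proof.
move=> cG; split; first exact: compact_quotient.
exact: hausdorff_quotient stable_core_separated.
Qed.

Lemma core_pi_C x : (core_pi @` C) (core_pi x) <-> C x.
Proof.
split=> [[y Cy /qpi_eqP /stable_core_sub Cyx]|Cx]; last by exists x.
have [[[_ CM _] _] _] := onC.
by rewrite -(mulVKg y x); exact: CM.
Qed.

(* [Negz n] stands for [-(n + 1)]. *)
Lemma aut_pow_set_core_aut x (k : int) :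
  aut_pow_set core_aut (core_pi @` C) k (core_pi x) <->
  match k with Posz n => C (iter n be x) | Negz n => C (iter n.+1 al x) end.
Proof.
case: k => n; rewrite /aut_pow_set; apply: iff_trans (core_pi_C _).
  rewrite (image_iter_can _ _ core_autK core_autVK).
  by rewrite -(core_iter_qmapE hbe stable_core_be); exact: iff_refl.
by rewrite preimage_iter -(core_iter_qmapE hal stable_core_al); exact: iff_refl.
Qed.

Lemma finite_depth_core_aut : finite_depth core_aut.
Proof.
exists (core_pi @` C); split.
  by apply: open_subgroup_qpi_image; exact: onC.1.
apply/seteqP; split => q; rewrite -[q]qpiK; move: (repr q) => x.
- move=> Hx; have Kx : stable_core x.
    move=> n; split; last exact/(aut_pow_set_core_aut x n)/Hx.
    case: n => [|n]; first exact/(aut_pow_set_core_aut x 0)/Hx.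
    exact/(aut_pow_set_core_aut x (Negz n))/Hx.
  by apply/esym/qpi_eqP; rewrite invg1 mul1g.
- move=> -> k _; apply/aut_pow_set_core_aut.
  by case: k => n; rewrite tg_hom1; try exact: tg_hom_iter; case: onC => -[[]].
Qed.
End StableCore.

Lemma subset_stable_core (G : topGroup) (al be : G -> G) (C D : set G) :
  C `<=` D -> stable_core al be C `<=` stable_core al be D.
Proof. by move=> CD x Kx n; have [? ?] := Kx n; split; exact: CD. Qed.

(** * The inverse limit *)

Section InverseLimit.
Variables (G : topGroup) (al be : G -> G).
Hypotheses (cG : compact [set: G]) (hG : hausdorff_space G).
Hypothesis tdG : totally_disconnected [set: G].
Hypotheses (hal : tg_hom al) (hbe : tg_hom be).
Hypotheses (cal : continuous al) (cbe : continuous be).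
Hypotheses (alK : cancel al be) (beK : cancel be al).

Lemma open_normal_subgroup_sub_open (U : set G) : open U -> U 1 ->
  exists C, open_normal_subgroup C /\ C `<=` U.
Proof.
move=> oU U1; have [K [cK K1 KU]] := totally_disconnected_clopen_nbhs hG cG tdG oU U1.
have [C [onC CK]] := open_normal_subgroup_sub_clopen cG cK K1.
by exists C; split => // x /CK /KU.
Qed.

Definition lim_index := {C : set G | open_normal_subgroup C}.
HB.instance Definition _ := gen_eqMixin lim_index.
HB.instance Definition _ := gen_choiceMixin lim_index.

Definition lim_le (i j : lim_index) := sval j `<=` sval i.

Definition lim_group (i : lim_index) : topGroup := core_quotient hal hbe (svalP i).

Definition lim_aut (i : lim_index) : lim_group i -> lim_group i :=
  core_aut (onC := svalP i).

Definition lim_pi (i : lim_index) : G -> lim_group i :=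
  qpi (subgroup_stable_core hal hbe (svalP i)).

Definition lim_bond (i j : lim_index) (q : lim_group j) : lim_group i :=
  lim_pi i (repr q).
Arguments lim_aut : clear implicits.
Arguments lim_bond : clear implicits.

Definition lim_meet (i j : lim_index) : lim_index :=
  exist _ _ (open_normal_subgroupI (svalP i) (svalP j)).

Lemma lim_le_meetl i j : lim_le i (lim_meet i j). Proof. by move=> x []. Qed.
Lemma lim_le_meetr i j : lim_le j (lim_meet i j). Proof. by move=> x []. Qed.

Lemma lim_piK i q : lim_pi i (repr q) = q. Proof. exact: qpiK. Qed.

Lemma lim_pi_eqP i x y :
  lim_pi i x = lim_pi i y <-> stable_core al be (sval i) (x^-1 * y).
Proof. exact: qpi_eqP. Qed.

Lemma lim_bondE i j x : lim_le i j -> lim_bond i j (lim_pi j x) = lim_pi i x.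
Proof.
move=> le_ij; apply/lim_pi_eqP; apply: (subset_stable_core le_ij).
by apply/lim_pi_eqP; rewrite lim_piK.
Qed.

Lemma lim_piM i x y : lim_pi i (x * y) = tg_mul (lim_pi i x) (lim_pi i y).
Proof.
exact: esym (qpiM _ (conjg_closed_stable_core hal hbe (svalP i)) x y).
Qed.

Lemma lim_autE i x : lim_aut i (lim_pi i x) = lim_pi i (al x).
Proof. exact: core_autE. Qed.

Lemma inverse_system_lim : inverse_system_aut lim_le lim_aut lim_bond.
Proof.
split.
  split; first by exists (exist _ _ (open_normal_subgroupT G)).
  - by move=> i.
  - by move=> i j k le_ij le_jk x /le_jk /le_ij.
  - by move=> i j; exists (lim_meet i j); split;
      [exact: lim_le_meetl|exact: lim_le_meetr].
split.
  by move=> i; split; [exact: compact_group_core_quotient|exact: tg_aut_core_aut].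
split.
  move=> i j le_ij; split.
    move=> p q; rewrite -[p]lim_piK -[q]lim_piK -lim_piM.
    by rewrite !lim_bondE // lim_piM.
  apply/quotient_continuous.
  have -> : lim_bond i j \o \pi%qT = lim_pi i by apply: funext => x; exact: lim_bondE.
  exact: continuous_qpi.
split; first by move=> i q; rewrite /lim_bond lim_piK.
split.
  move=> i j k q le_ij le_jk; rewrite -[q]lim_piK.
  have le_ik : lim_le i k by move=> z /le_jk /le_ij.
  by rewrite !lim_bondE.
move=> i j q le_ij; rewrite -[q]lim_piK.
by rewrite lim_autE !lim_bondE // lim_autE.
Qed.

Lemma separate_points_from_closed_lim_pi : separate_points_from_closed lim_pi.
Proof.
move=> U x cU nUx.
have oUx : open [set c | (~` U) (x * c)].
  by apply: open_mulgl_preimage; exact: closed_openC.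
have [C [onC CU]] : exists C, open_normal_subgroup C /\ C `<=` [set c | (~` U) (x * c)].
  by apply: open_normal_subgroup_sub_open oUx _; rewrite /= mulg1.
have [[[C1 CM _] oC] _] := onC.
exists (exist _ C onC) => clUx.
have : nbhs (lim_pi _ x) (lim_pi (exist _ C onC) @` [set c | C (x^-1 * c)]).
  by apply: nbhs_qpi_image; [exact: open_mulgl_preimage|rewrite /= mulVg].
move=> /clUx [_ [[u Uu <-] [w Cw /lim_pi_eqP /stable_core_sub Cwu]]].
apply: (CU (x^-1 * u)); last by rewrite mulVKg.
by rewrite -(mulVKg w u) mulgA; exact: CM.
Qed.

Local Notation lim_map := (join_product lim_pi).

(* The fibres [lim_pi i @^-1` [set z i]] form a filter base of closed sets of
   the compact group [G]; a cluster point is a preimage of [z]. *)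
Lemma range_lim_map : range lim_map = inv_lim lim_le lim_bond.
Proof.
apply/seteqP; split=> [_ [x _ <-] i j le_ij|z zlim]; first exact: lim_bondE.
pose fibre i := [set x : G | lim_pi i x = z i].
pose F := filter_from [set: lim_index] fibre.
have FF : ProperFilter F.
  apply: filter_from_proper; last by move=> i _; exists (repr (z i)); exact: lim_piK.
  apply: filter_from_filter; first by exists (exist _ _ (open_normal_subgroupT G)).
  move=> i j _ _; exists (lim_meet i j) => // x fx; split.
  - change (lim_pi i x = z i); rewrite -(lim_bondE x (@lim_le_meetl i j)) fx.
    exact: (zlim _ _ (@lim_le_meetl i j)).
  - change (lim_pi j x = z j); rewrite -(lim_bondE x (@lim_le_meetr i j)) fx.
    exact: (zlim _ _ (@lim_le_meetr i j)).
have FT : F [set: G] by exists (exist _ _ (open_normal_subgroupT G)).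
have [y [_ Fy]] := cG FF FT.
exists y => //; apply: functional_extensionality_dep => i; apply: contrapT => neq.
have [_ hGi] := compact_group_core_quotient hal hbe cal cbe (svalP i) cG.
have Fi : F (fibre i) by exists i.
have nbhs_y : nbhs y (lim_pi i @^-1` (~` [set z i])).
  apply: open_nbhs_nbhs; split => //.
  have : open (~` [set z i] : set (lim_group i)).
    exact/closed_openC/accessible_closed_set1/hausdorff_accessible.
  exact.
by have [x [fx nfx]] := Fy _ _ Fi nbhs_y.
Qed.

Lemma lim_iso : lim_iso_aut al lim_le lim_aut lim_bond lim_map.
Proof.
have sep := separate_points_from_closed_lim_pi.
have cpi i : continuous (lim_pi i) by exact: continuous_qpi.
split; first by move=> x y i; exact: lim_piM.
split; first exact: join_product_continuous.
split.
  move=> x y; apply: (join_product_inj sep (hausdorff_accessible hG)); exact: in_setT.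
split; first exact: range_lim_map.
split.
  move=> U /(join_product_open sep) /open_subspaceP [W oW WU].
  exists W; split => //; rewrite -range_lim_map WU; apply/seteqP; split.
    by move=> _ [x Ux <-]; split; [exists x|exists x].
  by move=> ? [].
by move=> x i; rewrite /= lim_autE.
Qed.

End InverseLimit.
Arguments lim_aut {G al be hal hbe} i.
Arguments lim_bond {G al be hal hbe} i j.

Theorem proposition5p3 (G : topGroup) (alpha : G -> G) :
  compact_group G -> totally_disconnected [set: tg_carrier G] ->
  tg_aut alpha ->
  exists (I : Type) (le : I -> I -> Prop) (Gi : I -> topGroup)
         (ai : forall i, Gi i -> Gi i) (phi : forall i j, Gi j -> Gi i)
         (f : G -> prod_topology (fun i => tg_carrier (Gi i))),
    [/\ inverse_system_aut le ai phi,
        (forall i, finite_depth (ai i))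
      & lim_iso_aut alpha le ai phi f].
Proof.
move=> [cG hG] tdG [[halpha calpha] [beta [alphaK betaK cbeta]]].
have hbeta := tg_hom_can halpha alphaK betaK.
exists (lim_index G), (@lim_le G), (lim_group halpha hbeta), lim_aut, lim_bond,
  (join_product (lim_pi halpha hbeta)); split.
- exact: inverse_system_lim.
- move=> i; exact: finite_depth_core_aut.
- exact: lim_iso.
Qed.
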